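(* For each $n\in\mathbb{N}_0$ and $m=1,\ldots,n+1$ (with products taken in $\mathbb{H}$), \begin{align*} \mathbf{X}^{0,\dagger}_n&=\tfrac{1}{n+2}\big(\mathbf{X}^{1,\dagger}_n\mathbf{e}_1+\mathbf{Y}^{1,\dagger}_n\mathbf{e}_2\big),\\ \mathbf{X}^{m,\dagger}_n&=-\tfrac{n+m+1}{2}\big(\mathbf{X}^{m-1,\dagger}_n\mathbf{e}_1-\mathbf{Y}^{m-1,\dagger}_n\mathbf{e}_2\big)+\tfrac{1}{2(n+m+2)}\big(\mathbf{X}^{m+1,\dagger}_n\mathbf{e}_1+\mathbf{Y}^{m+1,\dagger}_n\mathbf{e}_2\big),\\ \mathbf{Y}^{m,\dagger}_n&=-\tfrac{n+m+1}{2}\big(\mathbf{Y}^{m-1,\dagger}_n\mathbf{e}_1+\mathbf{X}^{m-1,\dagger}_n\mathbf{e}_2\big)+\tfrac{1}{2(n+m+2)}\big(\mathbf{Y}^{m+1,\dagger}_n\mathbf{e}_1-\mathbf{X}^{m+1,\dagger}_n\mathbf{e}_2\big), \end{align*} where $\mathbf{X}^{m,\dagger}_n=\mathbf{Y}^{m,\dagger}_n:=0$ for $m\ge n+2$ and $\mathbf{Y}^{0,\dagger}_n:=0$; moreover $\mathbf{X}^{0,\dagger}_0=\tfrac12=\mathbf{X}^{1,\dagger}_0\mathbf{e}_1=\mathbf{Y}^{1,\dagger}_0\mathbf{e}_2$.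
   Context: Quaternions $\mathbb{H}$ have basis $1,\mathbf{e}_1,\mathbf{e}_2,\mathbf{e}_3$ with $\mathbf{e}_i^2=-1$, $\mathbf{e}_1\mathbf{e}_2=\mathbf{e}_3=-\mathbf{e}_2\mathbf{e}_1$, $\mathbf{e}_2\mathbf{e}_3=\mathbf{e}_1=-\mathbf{e}_3\mathbf{e}_2$, $\mathbf{e}_3\mathbf{e}_1=\mathbf{e}_2=-\mathbf{e}_1\mathbf{e}_3$. Reduced quaternions: $\mathcal{A}=\mathrm{span}_\mathbb{R}\{1,\mathbf{e}_1,\mathbf{e}_2\}$; $x=(x_0,x_1,x_2)\in\mathbb{R}^3$ is identified with $x_0+x_1\mathbf{e}_1+x_2\mathbf{e}_2$. $\overline{D}=\partial_{x_0}-\mathbf{e}_1\partial_{x_1}-\mathbf{e}_2\partial_{x_2}$. Spherical coordinates: $x_0=r\cos\theta_1$, $x_1=r\sin\theta_1\cos\theta_2$, $x_2=r\sin\theta_1\sin\theta_2$. $P^m_n(t)=(1-t^2)^{m/2}\frac{d^m}{dt^m}P_n(t)$ is the associated Legendre function ($P_n$ the Legendre polynomial), $T_k,U_k$ the Chebyshev polynomials of first and second kind. Spherical harmonics: $U^l_{n}=P^l_{n}(\cos\theta_1)T_l(\cos\theta_2)$, $V^m_{n}=P^m_{n}(\cos\theta_1)\sin\theta_2\,U_{m-1}(\cos\theta_2)$. Basis polynomials: $\mathbf{X}^{l,\dagger}_n:=\tfrac12\overline{D}\big(r^{n+1}U^l_{n+1}\big)$, $l=0,\ldots,n+1$, and $\mathbf{Y}^{m,\dagger}_n:=\tfrac12\overline{D}\big(r^{n+1}V^m_{n+1}\big)$,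 $m=1,\ldots,n+1$. *)

From Stdlib Require Import Reals ClassicalEpsilon.
Open Scope R_scope.

Record quat := mkQ { q0 : R; q1 : R; q2 : R; q3 : R }.

Definition qzero : quat := mkQ 0 0 0 0.
Definition qreal (a : R) : quat := mkQ a 0 0 0.
Definition qe1 : quat := mkQ 0 1 0 0.
Definition qe2 : quat := mkQ 0 0 1 0.
Definition qadd (a b : quat) : quat :=
  mkQ (q0 a + q0 b) (q1 a + q1 b) (q2 a + q2 b) (q3 a + q3 b).
Definition qopp (a : quat) : quat := mkQ (- q0 a) (- q1 a) (- q2 a) (- q3 a).
Definition qsub (a b : quat) : quat := qadd a (qopp b).
Definition qscal (r : R) (a : quat) : quat :=
  mkQ (r * q0 a) (r * q1 a) (r * q2 a) (r * q3 a).
Definition qmul (a b : quat) : quat :=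
  mkQ (q0 a * q0 b - q1 a * q1 b - q2 a * q2 b - q3 a * q3 b)
      (q0 a * q1 b + q1 a * q0 b + q2 a * q3 b - q3 a * q2 b)
      (q0 a * q2 b - q1 a * q3 b + q2 a * q0 b + q3 a * q1 b)
      (q0 a * q3 b + q1 a * q2 b - q2 a * q1 b + q3 a * q0 b).

(* ---------- Derivatives (classical total operator; true derivative when it exists) ---------- *)
Definition Deriv (g : R -> R) (t : R) : R :=
  @epsilon R (inhabits 0) (fun l => derivable_pt_lim g t l).
Definition iterDeriv (m : nat) (g : R -> R) : R -> R := Nat.iter m Deriv g.

Definition pd0 (f : R -> R -> R -> R) x0 x1 x2 := Deriv (fun t => f t x1 x2) x0.
Definition pd1 (f : R -> R -> R -> R) x0 x1 x2 := Deriv (fun t => f x0 t x2) x1.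
Definition pd2 (f : R -> R -> R -> R) x0 x1 x2 := Deriv (fun t => f x0 x1 t) x2.

(* (1/2) Dbar f for real-valued f, Dbar = d0 - e1 d1 - e2 d2; values in A subset H *)
Definition halfDbar (f : R -> R -> R -> R) (x0 x1 x2 : R) : quat :=
  mkQ (pd0 f x0 x1 x2 / 2) (- pd1 f x0 x1 x2 / 2) (- pd2 f x0 x1 x2 / 2) 0.

(* legPair n t = (P_n t, P_{n+1} t), Bonnet: (k+1)P_{k+1} = (2k+1) t P_k - k P_{k-1} *)
Fixpoint legPair (n : nat) (t : R) : R * R :=
  match n with
  | O => (1, t)
  | S k => let (a, b) := legPair k t in
           (b, ((2 * INR k + 3) * t * b - (INR k + 1) * a) / (INR k + 2))
  end.
Definition Legendre (n : nat) (t : R) : R := fst (legPair n t).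

Definition assocLegendre (m n : nat) (t : R) : R :=
  (sqrt (1 - t ^ 2)) ^ m * iterDeriv m (Legendre n) t.

Fixpoint chebPair (a0 a1 : R) (n : nat) (t : R) : R * R :=
  match n with
  | O => (a0, a1)
  | S k => let (a, b) := chebPair a0 a1 k t in (b, 2 * t * b - a)
  end.
Definition ChebT (n : nat) (t : R) : R := fst (chebPair 1 t n t).
Definition ChebU (n : nat) (t : R) : R := fst (chebPair 1 (2 * t) n t).

(* x0 = r cos th1, x1 = r sin th1 cos th2, x2 = r sin th1 sin th2, th1 in [0,pi].
   Conventions at degenerate points: th1 = 0 if r = 0, th2 = 0 if x1 = x2 = 0. *)
Definition radius (x0 x1 x2 : R) : R := sqrt (x0 ^ 2 + x1 ^ 2 + x2 ^ 2).
Definition rho (x1 x2 : R) : R := sqrt (x1 ^ 2 + x2 ^ 2).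
Definition cos_th1 (x0 x1 x2 : R) : R :=
  if Req_dec_T (radius x0 x1 x2) 0 then 1 else x0 / radius x0 x1 x2.
Definition cos_th2 (x1 x2 : R) : R :=
  if Req_dec_T (rho x1 x2) 0 then 1 else x1 / rho x1 x2.
Definition sin_th2 (x1 x2 : R) : R :=
  if Req_dec_T (rho x1 x2) 0 then 0 else x2 / rho x1 x2.

Definition sphU (l k : nat) (x0 x1 x2 : R) : R :=
  assocLegendre l k (cos_th1 x0 x1 x2) * ChebT l (cos_th2 x1 x2).
Definition sphV (m k : nat) (x0 x1 x2 : R) : R :=
  assocLegendre m k (cos_th1 x0 x1 x2) * sin_th2 x1 x2 * ChebU (m - 1) (cos_th2 x1 x2).

Definition Xdag (l n : nat) (x0 x1 x2 : R) : quat :=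
  if Nat.leb (n + 2) l then qzero
  else halfDbar (fun a b c => radius a b c ^ (n + 1) * sphU l (n + 1) a b c) x0 x1 x2.
Definition Ydag (m n : nat) (x0 x1 x2 : R) : quat :=
  if Nat.eqb m 0 then qzero
  else if Nat.leb (n + 2) m then qzero
  else halfDbar (fun a b c => radius a b c ^ (n + 1) * sphV m (n + 1) a b c) x0 x1 x2.

(** Off the origin, [r^N U^l_N] and [r^N V^l_N] (with [N = n + 1]) are the real and imaginary
    parts of [r^(N-l) P_N^(l)(x0/r) (x1 + i x2)^l]: the Chebyshev factors become powers of
    [x1 + i x2] and the factor [(1 - t^2)^(l/2)] of [P^l_N] becomes a power of [rho / r].
    In terms of [d0], [d1 + i d2] and [d1 - i d2], the gradient of this function keeps, raises and
    lowers the power of [x1 + i x2], with coefficients built from [P_N^(l)] and [P_N^(l+1)]; the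
    associated Legendre equation links these coefficients at consecutive [l], and that link is
    exactly the quaternionic recurrence read componentwise.  At the origin every basis polynomial
    of degree [n >= 1] vanishes, being the gradient of a function bounded by [C r^(n+1)]; for
    [n = 0] the potentials are [x0], [x1], [x2]. *)

From Stdlib Require Import Reals Lra Lia ClassicalEpsilon FunctionalExtensionality.
Open Scope R_scope.

Lemma dlim_rewrite f x a b : derivable_pt_lim f x a -> a = b -> derivable_pt_lim f x b.
Proof. intros H <-; exact H. Qed.

Lemma dlim_add f g x a b : derivable_pt_lim f x a -> derivable_pt_lim g x b ->
  derivable_pt_lim (fun t => f t + g t) x (a + b).
Proof. exact (derivable_pt_lim_plus f g x a b). Qed.

Lemma dlim_sub f g x a b : derivable_pt_lim f x a -> derivable_pt_lim g x b ->
  derivable_pt_lim (fun t => f t - g t) x (a - b).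
Proof. exact (derivable_pt_lim_minus f g x a b). Qed.

Lemma dlim_mul f g x a b : derivable_pt_lim f x a -> derivable_pt_lim g x b ->
  derivable_pt_lim (fun t => f t * g t) x (a * g x + f x * b).
Proof. exact (derivable_pt_lim_mult f g x a b). Qed.

Lemma dlim_const (c x : R) : derivable_pt_lim (fun _ => c) x 0.
Proof. exact (derivable_pt_lim_const c x). Qed.

Lemma dlim_id x : derivable_pt_lim (fun t => t) x 1.
Proof. exact (derivable_pt_lim_id x). Qed.

Lemma dlim_comp f g x a b : derivable_pt_lim g x a -> derivable_pt_lim f (g x) b ->
  derivable_pt_lim (fun t => f (g t)) x (b * a).
Proof. exact (derivable_pt_lim_comp g f x a b). Qed.

Lemma dlim_pow f x a n : derivable_pt_lim f x a ->
  derivable_pt_lim (fun t => f t ^ n) x (INR n * f x ^ pred n * a).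
Proof. intros H; apply (dlim_comp (fun y => y ^ n) f x a), derivable_pt_lim_pow; exact H. Qed.

Lemma dlim_local f g x a (d : R) : 0 < d -> (forall t, Rabs (t - x) < d -> f t = g t) ->
  derivable_pt_lim f x a -> derivable_pt_lim g x a.
Proof.
  intros Hd Heq H.
  apply (derivable_pt_lim_locally_ext f g x (x - d) (x + d)); [lra| |exact H].
  intros z Hz; apply Heq, Rabs_def1; lra.
Qed.

Lemma dlim_ext f g x a : (forall t, f t = g t) -> derivable_pt_lim f x a -> derivable_pt_lim g x a.
Proof. intros Heq; apply (dlim_local f g x a 1); [lra|auto]. Qed.

Lemma dlim_inv f x a : derivable_pt_lim f x a -> f x <> 0 ->
  derivable_pt_lim (fun t => / f t) x (- a / f x ^ 2).
Proof.
  intros H Hf; eapply dlim_rewrite.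
  - apply (dlim_ext (fun t => 1 / f t)); [intros; unfold Rdiv; ring|].
    apply (derivable_pt_lim_div (fun _ => 1) f x 0 a); [apply dlim_const | exact H | exact Hf].
  - unfold Rsqr; field; exact Hf.
Qed.

Lemma dlim_sqrt f x a : derivable_pt_lim f x a -> 0 < f x ->
  derivable_pt_lim (fun t => sqrt (f t)) x (a / (2 * sqrt (f x))).
Proof.
  intros H Hp; eapply dlim_rewrite.
  - apply (dlim_comp sqrt f x a); [exact H | apply derivable_pt_lim_sqrt; exact Hp].
  - unfold Rdiv; ring.
Qed.

Lemma Deriv_of_dlim f x a : derivable_pt_lim f x a -> Deriv f x = a.
Proof.
  intros H; apply (uniqueness_limite f x); [|exact H].
  apply (epsilon_spec (inhabits 0) (fun l => derivable_pt_lim f x l)); eauto.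
Qed.

Lemma dlim_unique_ext f g x a b : (forall t, f t = g t) ->
  derivable_pt_lim f x a -> derivable_pt_lim g x b -> a = b.
Proof. intros Heq Ha Hb; apply (uniqueness_limite g x); [eapply dlim_ext|]; eauto. Qed.

Inductive poly_fun : nat -> (R -> R) -> Prop :=
| poly_const d c : poly_fun d (fun _ => c)
| poly_mulX d f : poly_fun d f -> poly_fun (S d) (fun t => t * f t)
| poly_add d f g : poly_fun d f -> poly_fun d g -> poly_fun d (fun t => f t + g t)
| poly_scale d a f : poly_fun d f -> poly_fun d (fun t => a * f t)
| poly_ext d f g : poly_fun d f -> (forall t, f t = g t) -> poly_fun d g.

Lemma poly_fun_S d f : poly_fun d f -> poly_fun (S d) f.
Proof. induction 1; econstructor; eauto. Qed.

Lemma poly_fun_derivable d f : poly_fun d f -> exists g, poly_fun (pred d) g /\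
  (forall t, derivable_pt_lim f t (g t)) /\ (d = 0%nat -> forall t, g t = 0).
Proof.
  induction 1 as [d c|d f Hf [g [Hg [Hd Hz]]]|d f g _ [f' [Hf [Hdf Hzf]]] _ [g' [Hg [Hdg Hzg]]]
                 |d a f _ [g [Hg [Hd Hz]]]|d f g _ [f' [Hf [Hd Hz]]] Heq].
  - exists (fun _ => 0); repeat split; [apply poly_const | intros; apply dlim_const].
  - exists (fun t => f t + t * g t); repeat split; [| |discriminate].
    + destruct d as [|d]; simpl.
      * apply (poly_ext 0 f); [exact Hf|]. intros t; rewrite (Hz eq_refl t); ring.
      * apply poly_add; [exact Hf | apply poly_mulX; exact Hg].
    + intros t; eapply dlim_rewrite; [apply dlim_mul; [apply dlim_id | apply Hd]|]; cbv beta; ring.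
  - exists (fun t => f' t + g' t); repeat split; [apply poly_add; assumption| |].
    + intros t; apply dlim_add; auto.
    + intros E t; rewrite Hzf, Hzg; auto; ring.
  - exists (fun t => a * g t); repeat split; [apply poly_scale; exact Hg| |].
    + intros t; eapply dlim_rewrite; [apply dlim_mul; [apply dlim_const | apply Hd]|]; cbv beta; ring.
    + intros E t; rewrite Hz; auto; ring.
  - exists f'; repeat split; auto. intros t; eapply dlim_ext; [exact Heq | apply Hd].
Qed.

Lemma poly_fun_Deriv d f : poly_fun d f -> poly_fun (pred d) (Deriv f) /\
  (forall t, derivable_pt_lim f t (Deriv f t)) /\ (d = 0%nat -> forall t, Deriv f t = 0).
Proof.
  intros H; destruct (poly_fun_derivable d f H) as [g [Hg [Hd Hz]]].
  assert (E : forall t, Deriv f t = g t) by (intros; apply Deriv_of_dlim, Hd).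
  repeat split; [apply (poly_ext _ g); auto | |]; intros; rewrite E; auto.
Qed.

Lemma poly_fun_iterDeriv d f l : poly_fun d f -> poly_fun (d - l) (iterDeriv l f).
Proof.
  intros H; induction l as [|l IH]; simpl.
  - rewrite Nat.sub_0_r; exact H.
  - replace (d - S l)%nat with (pred (d - l)) by lia. apply poly_fun_Deriv, IH.
Qed.

Lemma iterDeriv_poly_fun_vanish d f l t : poly_fun d f -> (d < l)%nat -> iterDeriv l f t = 0.
Proof.
  intros H Hl; destruct l as [|l]; [lia|].
  apply (poly_fun_Deriv _ _ (poly_fun_iterDeriv d f l H)); lia.
Qed.

Lemma poly_fun_bounded d f : poly_fun d f ->
  exists C, 0 <= C /\ forall t, Rabs t <= 1 -> Rabs (f t) <= C.
Proof.
  induction 1 as [d c|d f _ [C [HC Hb]]|d f g _ [C1 [H1 Hb1]] _ [C2 [H2 Hb2]]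
                 |d a f _ [C [HC Hb]]|d f g _ [C [HC Hb]] Heq].
  - exists (Rabs c); split; [apply Rabs_pos | intros; lra].
  - exists C; split; [exact HC|]. intros t Ht; rewrite Rabs_mult.
    specialize (Hb t Ht); assert (0 <= Rabs (f t)) by apply Rabs_pos; nra.
  - exists (C1 + C2); split; [lra|]. intros t Ht.
    specialize (Hb1 t Ht); specialize (Hb2 t Ht).
    eapply Rle_trans; [apply Rabs_triang | lra].
  - exists (Rabs a * C); split; [apply Rmult_le_pos; [apply Rabs_pos|exact HC]|].
    intros t Ht; rewrite Rabs_mult; apply Rmult_le_compat_l; [apply Rabs_pos | auto].
  - exists C; split; [exact HC|]. intros t Ht; rewrite <- Heq; auto.
Qed.

(** * Legendre polynomials *)

Lemma Legendre_rec k t : Legendre (S (S k)) t =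
  ((2 * INR k + 3) * t * Legendre (S k) t - (INR k + 1) * Legendre k t) / (INR k + 2).
Proof. unfold Legendre; simpl; destruct (legPair k t); reflexivity. Qed.

Lemma Legendre_poly_fun k : poly_fun k (Legendre k).
Proof.
  enough (H : poly_fun k (Legendre k) /\ poly_fun (S k) (Legendre (S k))) by apply H.
  induction k as [|k [H1 H2]]; split; try assumption.
  - apply (poly_ext 0 (fun _ => 1)); [apply poly_const | reflexivity].
  - apply (poly_ext 1 (fun t => t * 1)); [apply poly_mulX, poly_const | intros t; unfold Legendre; simpl; ring].
  - apply (poly_ext _ _ _ (poly_add _ _ _
      (poly_scale _ ((2 * INR k + 3) / (INR k + 2)) _ (poly_mulX _ _ H2))
      (poly_scale _ (- (INR k + 1) / (INR k + 2)) _ (poly_fun_S _ _ (poly_fun_S _ _ H1))))).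
    intros t; rewrite Legendre_rec; field; pose proof (pos_INR k); lra.
Qed.

Definition dLegendre (l N : nat) : R -> R := iterDeriv l (Legendre N).

Lemma dLegendre_derivable l N t : derivable_pt_lim (dLegendre l N) t (dLegendre (S l) N t).
Proof. apply (poly_fun_Deriv _ _ (poly_fun_iterDeriv _ _ l (Legendre_poly_fun N))). Qed.

Lemma dLegendre_vanish l N t : (N < l)%nat -> dLegendre l N t = 0.
Proof. apply iterDeriv_poly_fun_vanish, Legendre_poly_fun. Qed.

Lemma dLegendre_bounded l N :
  exists C, 0 <= C /\ forall t, Rabs t <= 1 -> Rabs (dLegendre l N t) <= C.
Proof. apply (poly_fun_bounded _ _ (poly_fun_iterDeriv _ _ l (Legendre_poly_fun N))). Qed.

Lemma dLegendre_1_1 t : dLegendre 1 1 t = 1.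
Proof. apply Deriv_of_dlim, dlim_id. Qed.

Lemma dLegendre_Bonnet k t : (INR k + 2) * dLegendre 1 (S (S k)) t =
  (2 * INR k + 3) * (Legendre (S k) t + t * dLegendre 1 (S k) t) - (INR k + 1) * dLegendre 1 k t.
Proof.
  pose proof (pos_INR k).
  enough (E : dLegendre 1 (S (S k)) t = ((2 * INR k + 3) * (1 * Legendre (S k) t
      + t * dLegendre 1 (S k) t) - (INR k + 1) * dLegendre 1 k t) / (INR k + 2))
    by (rewrite E; field; lra).
  apply (dlim_unique_ext (Legendre (S (S k))) (fun t => ((2 * INR k + 3) * t * Legendre (S k) t
      - (INR k + 1) * Legendre k t) / (INR k + 2)) t); [apply Legendre_rec | apply (dLegendre_derivable 0)|].
  unfold Rdiv; eapply dlim_rewrite.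
  - apply dlim_mul; [|apply dlim_const].
    apply dlim_sub; apply dlim_mul; try apply dlim_const; try apply (dLegendre_derivable 0).
    apply dlim_mul; [apply dlim_const | apply dlim_id].
  - cbv beta; field; lra.
Qed.

Lemma dLegendre_identities k t :
  t * dLegendre 1 (S k) t - dLegendre 1 k t = INR (S k) * Legendre (S k) t /\
  dLegendre 1 (S k) t - t * dLegendre 1 k t = INR (S k) * Legendre k t.
Proof.
  induction k as [|k [HA HB]].
  - rewrite (dLegendre_vanish 1 0), dLegendre_1_1 by lia; unfold Legendre; simpl; split; ring.
  - pose proof (dLegendre_Bonnet k t) as Hb; pose proof (Legendre_rec k t) as Hr.
    pose proof (pos_INR k). rewrite !S_INR in *.
    assert (HB' : dLegendre 1 (S (S k)) t - t * dLegendre 1 (S k) t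
                  = (INR k + 1 + 1) * Legendre (S k) t).
    { apply (Rmult_eq_reg_l (INR k + 2)); [|lra].
      rewrite Rmult_minus_distr_l, Hb.
      replace (dLegendre 1 k t) with (t * dLegendre 1 (S k) t - (INR k + 1) * Legendre (S k) t)
        by lra.
      ring. }
    split; [|exact HB'].
    assert (HP : (INR k + 2) * Legendre (S (S k)) t
                 = (2 * INR k + 3) * t * Legendre (S k) t - (INR k + 1) * Legendre k t)
      by (rewrite Hr; field; lra).
    assert (HC : (1 - t ^ 2) * dLegendre 1 (S k) t = (INR k + 1) * (Legendre k t - t * Legendre (S k) t)).
    { transitivity ((dLegendre 1 (S k) t - t * dLegendre 1 k t)
                    - t * (t * dLegendre 1 (S k) t - dLegendre 1 k t)); [ring|].
      rewrite HA, HB; ring. }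
    apply (Rmult_eq_reg_l (INR k + 2)); [|lra].
    replace (dLegendre 1 (S (S k)) t) with (t * dLegendre 1 (S k) t + (INR k + 1 + 1) * Legendre (S k) t)
      by lra.
    transitivity (- (INR k + 2) * ((1 - t ^ 2) * dLegendre 1 (S k) t)
                  + (INR k + 2) * (INR k + 2) * t * Legendre (S k) t); [ring|].
    rewrite HC.
    transitivity ((INR k + 2) * ((INR k + 2) * Legendre (S (S k)) t)); [|ring].
    rewrite HP; ring.
Qed.

Lemma Legendre_ODE N t :
  (1 - t ^ 2) * dLegendre 2 N t - 2 * t * dLegendre 1 N t + INR N * (INR N + 1) * Legendre N t = 0.
Proof.
  destruct N as [|k].
  - rewrite (dLegendre_vanish 2 0), (dLegendre_vanish 1 0) by lia; simpl; ring.
  - assert (HC : forall s, (1 - s ^ 2) * dLegendre 1 (S k) s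
                           = INR (S k) * (Legendre k s - s * Legendre (S k) s)).
    { intros s; destruct (dLegendre_identities k s) as [HA HB].
      transitivity ((dLegendre 1 (S k) s - s * dLegendre 1 k s)
                    - s * (s * dLegendre 1 (S k) s - dLegendre 1 k s)); [ring|].
      rewrite HA, HB; ring. }
    assert (E : - (2 * t) * dLegendre 1 (S k) t + (1 - t ^ 2) * dLegendre 2 (S k) t =
                INR (S k) * (dLegendre 1 k t - (Legendre (S k) t + t * dLegendre 1 (S k) t))).
    { apply (dlim_unique_ext _ _ t _ _ HC).
      - eapply dlim_rewrite; [apply dlim_mul; [apply dlim_sub; [apply dlim_const|] | apply dLegendre_derivable]|].
        + apply (dlim_pow (fun t => t)), dlim_id.
        + simpl; ring.
      - eapply dlim_rewrite.
        + apply dlim_mul; [apply dlim_const|].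
          apply dlim_sub; [apply (dLegendre_derivable 0)|].
          apply dlim_mul; [apply dlim_id | apply (dLegendre_derivable 0)].
        + cbv beta; ring. }
    destruct (dLegendre_identities k t) as [HA _].
    replace (dLegendre 1 k t) with (t * dLegendre 1 (S k) t - INR (S k) * Legendre (S k) t) in E
      by lra.
    rewrite S_INR in *; nra.
Qed.

(** [Legendre_ODE] differentiated [l] times. *)
Lemma dLegendre_ODE N l t :
  (1 - t ^ 2) * dLegendre (S (S l)) N t - 2 * (INR l + 1) * t * dLegendre (S l) N t
  + (INR N * (INR N + 1) - INR l * (INR l + 1)) * dLegendre l N t = 0.
Proof.
  revert t; induction l as [|l IH]; intros t.
  - pose proof (Legendre_ODE N t); change (dLegendre 0 N t) with (Legendre N t); simpl INR; lra.
  - assert (E : - (2 * t) * dLegendre (S (S l)) N t + (1 - t ^ 2) * dLegendre (S (S (S l))) N t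
        - 2 * (INR l + 1) * (dLegendre (S l) N t + t * dLegendre (S (S l)) N t)
        + (INR N * (INR N + 1) - INR l * (INR l + 1)) * dLegendre (S l) N t = 0).
    { apply (dlim_unique_ext _ (fun _ => 0) t _ _ IH); [|apply dlim_const].
      eapply dlim_rewrite.
      - apply dlim_add; [apply dlim_sub|].
        + apply dlim_mul; [apply dlim_sub; [apply dlim_const|] | apply dLegendre_derivable].
          apply (dlim_pow (fun t => t)), dlim_id.
        + apply dlim_mul; [apply dlim_mul; [apply dlim_const | apply dlim_id] | apply dLegendre_derivable].
        + apply dlim_mul; [apply dlim_const | apply dLegendre_derivable].
      - simpl; ring. }
    rewrite S_INR; lra.
Qed.

(** * Powers of [y1 + i y2] and Chebyshev polynomials *)

(** [zpow l y1 y2] is the pair of real and imaginary parts of [(y1 + i y2)^l]. *)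
Fixpoint zpow (l : nat) (y1 y2 : R) : R * R :=
  match l with
  | O => (1, 0)
  | S k => let (a, b) := zpow k y1 y2 in (y1 * a - y2 * b, y2 * a + y1 * b)
  end.
Definition zre l y1 y2 := fst (zpow l y1 y2).
Definition zim l y1 y2 := snd (zpow l y1 y2).

Lemma zre_S k y1 y2 : zre (S k) y1 y2 = y1 * zre k y1 y2 - y2 * zim k y1 y2.
Proof. unfold zre, zim; simpl; destruct (zpow k y1 y2); reflexivity. Qed.

Lemma zim_S k y1 y2 : zim (S k) y1 y2 = y2 * zre k y1 y2 + y1 * zim k y1 y2.
Proof. unfold zre, zim; simpl; destruct (zpow k y1 y2); reflexivity. Qed.

Lemma zre_SS k y1 y2 :
  zre (S (S k)) y1 y2 = 2 * y1 * zre (S k) y1 y2 - (y1 ^ 2 + y2 ^ 2) * zre k y1 y2.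
Proof. rewrite (zre_S (S k)), (zim_S k), (zre_S k); ring. Qed.

Lemma zim_SS k y1 y2 :
  zim (S (S k)) y1 y2 = 2 * y1 * zim (S k) y1 y2 - (y1 ^ 2 + y2 ^ 2) * zim k y1 y2.
Proof. rewrite (zim_S (S k)), (zre_S k), (zim_S k); ring. Qed.

Lemma zim_origin k : zim k 0 0 = 0.
Proof. induction k as [|k IH]; [reflexivity | rewrite zim_S, IH; ring]. Qed.

Lemma chebPair_rec a0 a1 k t :
  fst (chebPair a0 a1 (S (S k)) t) = 2 * t * fst (chebPair a0 a1 (S k) t) - fst (chebPair a0 a1 k t).
Proof. simpl; destruct (chebPair a0 a1 k t); reflexivity. Qed.

Lemma chebPair_poly_fun (a1 : R -> R) k : poly_fun 1 a1 ->
  poly_fun k (fun t => fst (chebPair 1 (a1 t) k t)).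
Proof.
  intros H1.
  enough (H : poly_fun k (fun t => fst (chebPair 1 (a1 t) k t))
              /\ poly_fun (S k) (fun t => fst (chebPair 1 (a1 t) (S k) t))) by apply H.
  induction k as [|k [Hk HSk]]; split; try assumption.
  - apply (poly_ext 0 (fun _ => 1)); [apply poly_const | reflexivity].
  - apply (poly_ext _ _ _ (poly_add _ _ _ (poly_scale _ 2 _ (poly_mulX _ _ HSk))
                                        (poly_scale _ (-1) _ (poly_fun_S _ _ (poly_fun_S _ _ Hk))))).
    intros t; rewrite chebPair_rec; ring.
Qed.

Lemma ChebT_poly_fun k : poly_fun k (ChebT k).
Proof.
  apply (chebPair_poly_fun (fun t => t)).
  apply (poly_ext 1 (fun t => t * 1)); [apply poly_mulX, poly_const | intros; ring].
Qed.

Lemma ChebU_poly_fun k : poly_fun k (ChebU k).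
Proof.
  apply (chebPair_poly_fun (fun t => 2 * t)).
  apply (poly_ext 1 (fun t => t * 2)); [apply poly_mulX, poly_const | intros; ring].
Qed.

Lemma rho_sq y1 y2 : rho y1 y2 ^ 2 = y1 ^ 2 + y2 ^ 2.
Proof. apply pow2_sqrt; nra. Qed.

Lemma rho_eq0 y1 y2 : rho y1 y2 = 0 -> y1 = 0 /\ y2 = 0.
Proof. intros H; pose proof (rho_sq y1 y2) as E; rewrite H in E; nra. Qed.

(** In polar coordinates [y1 + i y2 = rho e^(i th2)], so [T_l] and [U_(l-1)] give [cos (l th2)] and
    [sin (l th2) / sin th2]. *)
Lemma ChebT_cos_th2 l y1 y2 : rho y1 y2 ^ l * ChebT l (cos_th2 y1 y2) = zre l y1 y2.
Proof.
  unfold cos_th2; destruct (Req_dec_T (rho y1 y2) 0) as [H0|H0].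
  - destruct (rho_eq0 _ _ H0) as [-> ->]; rewrite H0.
    destruct l as [|l]; [unfold ChebT, zre; simpl; ring|]. rewrite zre_S; simpl; ring.
  - set (r := rho y1 y2) in *; assert (Hr : r ^ 2 = y1 ^ 2 + y2 ^ 2) by apply rho_sq.
    enough (HP : r ^ l * ChebT l (y1 / r) = zre l y1 y2 /\
                 r ^ S l * ChebT (S l) (y1 / r) = zre (S l) y1 y2) by apply HP.
    induction l as [|k [IH1 IH2]]; split; try assumption.
    + unfold ChebT, zre; simpl; ring.
    + rewrite zre_S; unfold ChebT, zre, zim; simpl; field; exact H0.
    + unfold ChebT; rewrite chebPair_rec, zre_SS, <- IH1, <- IH2, <- Hr.
      unfold ChebT; simpl; field; exact H0.
Qed.

Lemma ChebU_sin_th2 k y1 y2 :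
  rho y1 y2 ^ S k * sin_th2 y1 y2 * ChebU k (cos_th2 y1 y2) = zim (S k) y1 y2.
Proof.
  unfold cos_th2, sin_th2; destruct (Req_dec_T (rho y1 y2) 0) as [H0|H0].
  - destruct (rho_eq0 _ _ H0) as [-> ->]; rewrite zim_origin; ring.
  - set (r := rho y1 y2) in *; assert (Hr : r ^ 2 = y1 ^ 2 + y2 ^ 2) by apply rho_sq.
    enough (HP : r ^ S k * (y2 / r) * ChebU k (y1 / r) = zim (S k) y1 y2 /\
                 r ^ S (S k) * (y2 / r) * ChebU (S k) (y1 / r) = zim (S (S k)) y1 y2) by apply HP.
    induction k as [|k [IH1 IH2]]; split; try assumption.
    + rewrite zim_S; unfold ChebU, zre, zim; simpl; field; exact H0.
    + rewrite !zim_S, zre_S; unfold ChebU, zre, zim; simpl; field; exact H0.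
    + unfold ChebU; rewrite chebPair_rec, zim_SS, <- IH1, <- IH2, <- Hr.
      unfold ChebU; simpl; field; exact H0.
Qed.

(** * Solid harmonics away from the origin *)

Lemma radius_sq x0 x1 x2 : radius x0 x1 x2 ^ 2 = x0 ^ 2 + x1 ^ 2 + x2 ^ 2.
Proof. apply pow2_sqrt; nra. Qed.

Lemma radius_pos x0 x1 x2 : radius x0 x1 x2 <> 0 -> 0 < radius x0 x1 x2.
Proof. intros H; pose proof (sqrt_pos (x0 ^ 2 + x1 ^ 2 + x2 ^ 2)); unfold radius in *; lra. Qed.

Lemma radius_eq0 x0 x1 x2 : radius x0 x1 x2 = 0 -> x0 = 0 /\ x1 = 0 /\ x2 = 0.
Proof. intros H; pose proof (radius_sq x0 x1 x2) as E; rewrite H in E; nra. Qed.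

Lemma sin_th1 x0 x1 x2 : radius x0 x1 x2 <> 0 ->
  sqrt (1 - (x0 / radius x0 x1 x2) ^ 2) = rho x1 x2 / radius x0 x1 x2.
Proof.
  intros H; pose proof (radius_pos _ _ _ H) as Hp; pose proof (radius_sq x0 x1 x2) as E.
  replace (1 - (x0 / radius x0 x1 x2) ^ 2) with ((rho x1 x2 / radius x0 x1 x2) ^ 2).
  - apply sqrt_pow2, Rle_mult_inv_pos; [apply sqrt_pos | exact Hp].
  - unfold Rdiv; rewrite !Rpow_mult_distr, rho_sq, pow_inv, E; field.
    rewrite <- E; apply pow_nonzero; exact H.
Qed.

(** [radial N l r = r^(N-l)], written so that it needs no subtraction. *)
Definition radial (N l : nat) (r : R) : R := r ^ N * (/ r) ^ l.

Definition solidU (l N : nat) (y0 y1 y2 : R) : R :=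
  radial N l (radius y0 y1 y2) * dLegendre l N (y0 / radius y0 y1 y2) * zre l y1 y2.
Definition solidV (l N : nat) (y0 y1 y2 : R) : R :=
  radial N l (radius y0 y1 y2) * dLegendre l N (y0 / radius y0 y1 y2) * zim l y1 y2.

Lemma sphU_solid l N x0 x1 x2 : radius x0 x1 x2 <> 0 ->
  radius x0 x1 x2 ^ N * sphU l N x0 x1 x2 = solidU l N x0 x1 x2.
Proof.
  intros H; unfold sphU, solidU, assocLegendre, cos_th1.
  destruct (Req_dec_T (radius x0 x1 x2) 0) as [E|_]; [contradiction|].
  rewrite sin_th1, <- ChebT_cos_th2 by exact H; unfold radial, dLegendre, Rdiv.
  rewrite Rpow_mult_distr; ring.
Qed.

Lemma sphV_solid k N x0 x1 x2 : radius x0 x1 x2 <> 0 ->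
  radius x0 x1 x2 ^ N * sphV (S k) N x0 x1 x2 = solidV (S k) N x0 x1 x2.
Proof.
  intros H; unfold sphV, solidV, assocLegendre, cos_th1.
  destruct (Req_dec_T (radius x0 x1 x2) 0) as [E|_]; [contradiction|].
  rewrite sin_th1, <- ChebU_sin_th2 by exact H; unfold radial, dLegendre, Rdiv.
  replace (S k - 1)%nat with k by lia.
  rewrite Rpow_mult_distr; ring.
Qed.

Section PathDerivatives.

Variables (y0 y1 y2 : R -> R) (t d0 d1 d2 : R).
Hypotheses (Hy0 : derivable_pt_lim y0 t d0) (Hy1 : derivable_pt_lim y1 t d1)
           (Hy2 : derivable_pt_lim y2 t d2).

Local Notation r := (radius (y0 t) (y1 t) (y2 t)).
Local Notation c := (y0 t / radius (y0 t) (y1 t) (y2 t)).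
Local Notation rd := ((y0 t * d0 + y1 t * d1 + y2 t * d2) / radius (y0 t) (y1 t) (y2 t)).

Lemma zpow_derivable l :
  derivable_pt_lim (fun s => zre l (y1 s) (y2 s)) t
     (INR l * (zre (pred l) (y1 t) (y2 t) * d1 - zim (pred l) (y1 t) (y2 t) * d2)) /\
  derivable_pt_lim (fun s => zim l (y1 s) (y2 s)) t
     (INR l * (zim (pred l) (y1 t) (y2 t) * d1 + zre (pred l) (y1 t) (y2 t) * d2)).
Proof.
  induction l as [|l [IA IB]].
  - split; [apply (dlim_ext (fun _ => 1)) | apply (dlim_ext (fun _ => 0))];
      try reflexivity; (eapply dlim_rewrite; [apply dlim_const | simpl; ring]).
  - split.
    + apply (dlim_ext (fun s => y1 s * zre l (y1 s) (y2 s) - y2 s * zim l (y1 s) (y2 s)));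
        [intros; symmetry; apply zre_S|].
      eapply dlim_rewrite; [apply dlim_sub; apply dlim_mul; eassumption|].
      destruct l as [|l]; simpl pred in *; [simpl; ring|].
      rewrite (zre_S l), (zim_S l), !S_INR; ring.
    + apply (dlim_ext (fun s => y2 s * zre l (y1 s) (y2 s) + y1 s * zim l (y1 s) (y2 s)));
        [intros; symmetry; apply zim_S|].
      eapply dlim_rewrite; [apply dlim_add; apply dlim_mul; eassumption|].
      destruct l as [|l]; simpl pred in *; [simpl; ring|].
      rewrite (zre_S l), (zim_S l), !S_INR; ring.
Qed.

Hypothesis Hr : r <> 0.

Lemma radius_derivable : derivable_pt_lim (fun s => radius (y0 s) (y1 s) (y2 s)) t rd.
Proof.
  pose proof (radius_pos _ _ _ Hr); pose proof (radius_sq (y0 t) (y1 t) (y2 t)).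
  unfold radius at 1; eapply dlim_rewrite.
  - apply dlim_sqrt; [apply dlim_add; [apply dlim_add|]; apply dlim_pow; eassumption|].
    change (0 < (y0 t ^ 2 + y1 t ^ 2 + y2 t ^ 2)); nra.
  - cbn [pred INR]; fold (radius (y0 t) (y1 t) (y2 t)); field; lra.
Qed.

Lemma radial_dLegendre_derivable l N :
  derivable_pt_lim (fun s => radial N l (radius (y0 s) (y1 s) (y2 s))
                             * dLegendre l N (y0 s / radius (y0 s) (y1 s) (y2 s))) t
    (radial N l r / r * ((INR N - INR l) * rd * dLegendre l N c + dLegendre (S l) N c * (d0 - c * rd))).
Proof.
  pose proof (radius_pos _ _ _ Hr).
  assert (HI := dlim_inv _ _ _ radius_derivable Hr).
  unfold radial; eapply dlim_rewrite.
  - apply dlim_mul; [apply dlim_mul; apply dlim_pow; [apply radius_derivable | exact HI]|].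
    apply (dlim_comp (dLegendre l N) (fun s => y0 s / radius (y0 s) (y1 s) (y2 s)));
      [apply dlim_mul; eassumption | apply dLegendre_derivable].
  - unfold Rdiv.
    destruct N as [|N]; destruct l as [|l]; cbn [pow pred]; rewrite ?S_INR; simpl INR; field; lra.
Qed.

Lemma solid_derivable l N :
  derivable_pt_lim (fun s => solidU l N (y0 s) (y1 s) (y2 s)) t
    (radial N l r / r * ((INR N - INR l) * rd * dLegendre l N c + dLegendre (S l) N c * (d0 - c * rd))
       * zre l (y1 t) (y2 t)
     + radial N l r * dLegendre l N c
       * (INR l * (zre (pred l) (y1 t) (y2 t) * d1 - zim (pred l) (y1 t) (y2 t) * d2))) /\
  derivable_pt_lim (fun s => solidV l N (y0 s) (y1 s) (y2 s)) t
    (radial N l r / r * ((INR N - INR l) * rd * dLegendre l N c + dLegendre (S l) N c * (d0 - c * rd))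
       * zim l (y1 t) (y2 t)
     + radial N l r * dLegendre l N c
       * (INR l * (zim (pred l) (y1 t) (y2 t) * d1 + zre (pred l) (y1 t) (y2 t) * d2))).
Proof.
  destruct (zpow_derivable l) as [HA HB].
  split; unfold solidU, solidV; eapply dlim_rewrite;
    try (apply dlim_mul; [apply radial_dLegendre_derivable | eassumption]); reflexivity.
Qed.

End PathDerivatives.

(** * Partial derivatives of the potentials *)

Definition harmU (l n : nat) (a b c : R) : R := radius a b c ^ (n + 1) * sphU l (n + 1) a b c.
Definition harmV (l n : nat) (a b c : R) : R := radius a b c ^ (n + 1) * sphV l (n + 1) a b c.

Lemma dlim_path_off_origin (f g : R -> R -> R -> R) (y0 y1 y2 : R -> R) t d0 d1 d2 a :
  (forall a b c, radius a b c <> 0 -> f a b c = g a b c) ->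
  derivable_pt_lim y0 t d0 -> derivable_pt_lim y1 t d1 -> derivable_pt_lim y2 t d2 ->
  radius (y0 t) (y1 t) (y2 t) <> 0 ->
  derivable_pt_lim (fun s => g (y0 s) (y1 s) (y2 s)) t a ->
  derivable_pt_lim (fun s => f (y0 s) (y1 s) (y2 s)) t a.
Proof.
  intros Hfg H0 H1 H2 Hr Hg.
  assert (Hc : continuity_pt (fun s => radius (y0 s) (y1 s) (y2 s)) t).
  { apply derivable_continuous_pt; eexists; apply (radius_derivable _ _ _ _ _ _ _ H0 H1 H2 Hr). }
  destruct (continuous_neq_0 _ _ Hc Hr) as [d Hd].
  apply (dlim_local (fun s => g (y0 s) (y1 s) (y2 s)) _ _ _ d (cond_pos d)); [|exact Hg].
  intros s Hs; symmetry; apply Hfg.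
  replace s with (t + (s - t)) by ring; apply Hd, Hs.
Qed.

Section Components.

Variables (N : nat) (x0 x1 x2 : R).

Local Notation r := (radius x0 x1 x2).
Local Notation c := (x0 / radius x0 x1 x2).

Definition weight j := radial N j r.
Definition legc j := dLegendre j N c.
Definition alpha j := (INR N - INR j) * c * legc j + (1 - c ^ 2) * legc (S j).
Definition beta j := (INR N - INR j) * legc j - c * legc (S j).
Definition gamma j := (1 - c ^ 2) * beta j + 2 * INR j * legc j.

(** The partial derivatives of [solidU j N] and [solidV j N] at [x], by the chain rule. *)
Definition dU0 j := weight j / r * alpha j * zre j x1 x2.
Definition dV0 j := weight j / r * alpha j * zim j x1 x2.
Definition dU1 j :=
  weight j / r ^ 2 * x1 * beta j * zre j x1 x2 + weight j * legc j * (INR j * zre (pred j) x1 x2).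
Definition dU2 j :=
  weight j / r ^ 2 * x2 * beta j * zre j x1 x2 - weight j * legc j * (INR j * zim (pred j) x1 x2).
Definition dV1 j :=
  weight j / r ^ 2 * x1 * beta j * zim j x1 x2 + weight j * legc j * (INR j * zim (pred j) x1 x2).
Definition dV2 j :=
  weight j / r ^ 2 * x2 * beta j * zim j x1 x2 + weight j * legc j * (INR j * zre (pred j) x1 x2).

(** The operators [d1 + i d2] and [d1 - i d2], applied to [solidU j N + i solidV j N], raise and
    lower the power of [x1 + i x2]. *)
Lemma dU1_sub_dV2 j : dU1 j - dV2 j = weight j / r ^ 2 * beta j * zre (S j) x1 x2.
Proof. unfold dU1, dV2; rewrite zre_S; ring. Qed.

Lemma dU2_add_dV1 j : dU2 j + dV1 j = weight j / r ^ 2 * beta j * zim (S j) x1 x2.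
Proof. unfold dU2, dV1; rewrite zim_S; ring. Qed.

Lemma legc_ODE k : (1 - c ^ 2) * legc (S (S k)) - 2 * (INR k + 1) * c * legc (S k)
  + (INR N * (INR N + 1) - INR k * (INR k + 1)) * legc k = 0.
Proof. apply dLegendre_ODE. Qed.

Lemma alpha_S k : alpha (S k) = - (INR N + INR (S k)) * beta k.
Proof.
  pose proof (legc_ODE k); unfold alpha, beta; rewrite S_INR in *.
  set (p0 := legc k) in *; set (p1 := legc (S k)) in *; set (p2 := legc (S (S k))) in *; lra.
Qed.

Lemma gamma_S k : gamma (S k) = (INR N + INR (S k)) * alpha k.
Proof.
  pose proof (legc_ODE k) as E; unfold gamma, alpha, beta; rewrite S_INR in *.
  set (p0 := legc k) in *; set (p1 := legc (S k)) in *; set (p2 := legc (S (S k))) in *.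
  apply (f_equal (Rmult c)) in E; lra.
Qed.

Hypothesis Hr : r <> 0.

Lemma weight_S j : weight (S j) = weight j / r.
Proof. unfold weight, radial; simpl; field; exact Hr. Qed.

Lemma x1_sq_add_x2_sq : x1 ^ 2 + x2 ^ 2 = r ^ 2 * (1 - c ^ 2).
Proof. pose proof (radius_sq x0 x1 x2); field_simplify; [lra | exact Hr]. Qed.

Lemma dU1_add_dV2 i : dU1 (S i) + dV2 (S i) = weight (S i) * gamma (S i) * zre i x1 x2.
Proof.
  unfold dU1, dV2, gamma; simpl pred; rewrite (zre_S i), (zim_S i).
  transitivity (weight (S i) / r ^ 2 * beta (S i) * ((x1 ^ 2 + x2 ^ 2) * zre i x1 x2)
                + 2 * weight (S i) * legc (S i) * INR (S i) * zre i x1 x2); [ring|].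
  rewrite x1_sq_add_x2_sq; field; exact Hr.
Qed.

Lemma dV1_sub_dU2 i : dV1 (S i) - dU2 (S i) = weight (S i) * gamma (S i) * zim i x1 x2.
Proof.
  unfold dV1, dU2, gamma; simpl pred; rewrite (zre_S i), (zim_S i).
  transitivity (weight (S i) / r ^ 2 * beta (S i) * ((x1 ^ 2 + x2 ^ 2) * zim i x1 x2)
                + 2 * weight (S i) * legc (S i) * INR (S i) * zim i x1 x2); [ring|].
  rewrite x1_sq_add_x2_sq; field; exact Hr.
Qed.

End Components.

Lemma partials_off_origin (f g : R -> R -> R -> R) x0 x1 x2 D0 D1 D2 :
  (forall a b c, radius a b c <> 0 -> f a b c = g a b c) -> radius x0 x1 x2 <> 0 ->
  derivable_pt_lim (fun t => g t x1 x2) x0 D0 -> derivable_pt_lim (fun t => g x0 t x2) x1 D1 ->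
  derivable_pt_lim (fun t => g x0 x1 t) x2 D2 ->
  pd0 f x0 x1 x2 = D0 /\ pd1 f x0 x1 x2 = D1 /\ pd2 f x0 x1 x2 = D2.
Proof.
  intros Hfg Hr H0 H1 H2; repeat split; apply Deriv_of_dlim.
  - exact (dlim_path_off_origin f g (fun t => t) (fun _ => x1) (fun _ => x2) x0 1 0 0 D0 Hfg
             (dlim_id _) (dlim_const _ _) (dlim_const _ _) Hr H0).
  - exact (dlim_path_off_origin f g (fun _ => x0) (fun t => t) (fun _ => x2) x1 0 1 0 D1 Hfg
             (dlim_const _ _) (dlim_id _) (dlim_const _ _) Hr H1).
  - exact (dlim_path_off_origin f g (fun _ => x0) (fun _ => x1) (fun t => t) x2 0 0 1 D2 Hfg
             (dlim_const _ _) (dlim_const _ _) (dlim_id _) Hr H2).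
Qed.

Lemma partials_harmU l n x0 x1 x2 : radius x0 x1 x2 <> 0 ->
  pd0 (harmU l n) x0 x1 x2 = dU0 (n + 1) x0 x1 x2 l /\
  pd1 (harmU l n) x0 x1 x2 = dU1 (n + 1) x0 x1 x2 l /\
  pd2 (harmU l n) x0 x1 x2 = dU2 (n + 1) x0 x1 x2 l.
Proof.
  intros Hr; pose proof (radius_pos _ _ _ Hr).
  apply (partials_off_origin _ (solidU l (n + 1))); [intros; apply sphU_solid; assumption|exact Hr| | |];
    (eapply dlim_rewrite; [apply solid_derivable; try apply dlim_id; try apply dlim_const; exact Hr|]);
    unfold dU0, dU1, dU2, weight, alpha, beta, legc; field; lra.
Qed.

Lemma partials_harmV k n x0 x1 x2 : radius x0 x1 x2 <> 0 ->
  pd0 (harmV (S k) n) x0 x1 x2 = dV0 (n + 1) x0 x1 x2 (S k) /\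
  pd1 (harmV (S k) n) x0 x1 x2 = dV1 (n + 1) x0 x1 x2 (S k) /\
  pd2 (harmV (S k) n) x0 x1 x2 = dV2 (n + 1) x0 x1 x2 (S k).
Proof.
  intros Hr; pose proof (radius_pos _ _ _ Hr).
  apply (partials_off_origin _ (solidV (S k) (n + 1))); [intros; apply sphV_solid; assumption|exact Hr| | |];
    (eapply dlim_rewrite; [apply solid_derivable; try apply dlim_id; try apply dlim_const; exact Hr|]);
    unfold dV0, dV1, dV2, weight, alpha, beta, legc; field; lra.
Qed.

Definition gradq (a0 a1 a2 : R) : quat := mkQ (a0 / 2) (- a1 / 2) (- a2 / 2) 0.

Lemma Xdag_off_origin l n x0 x1 x2 : radius x0 x1 x2 <> 0 -> (l <= n + 2)%nat ->
  Xdag l n x0 x1 x2 =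
  gradq (dU0 (n + 1) x0 x1 x2 l) (dU1 (n + 1) x0 x1 x2 l) (dU2 (n + 1) x0 x1 x2 l).
Proof.
  intros Hr Hl; unfold Xdag.
  destruct (Nat.leb (n + 2) l) eqn:E.
  - apply Nat.leb_le in E; replace l with (S (n + 1)) by lia.
    unfold gradq, dU0, dU1, dU2, alpha, beta, legc; rewrite !dLegendre_vanish by lia.
    unfold qzero; f_equal; field; exact Hr.
  - change (halfDbar (harmU l n) x0 x1 x2 = gradq (dU0 (n + 1) x0 x1 x2 l)
      (dU1 (n + 1) x0 x1 x2 l) (dU2 (n + 1) x0 x1 x2 l)).
    destruct (partials_harmU l n x0 x1 x2 Hr) as [<- [<- <-]]; reflexivity.
Qed.

Lemma Ydag_off_origin l n x0 x1 x2 : radius x0 x1 x2 <> 0 -> (l <= n + 2)%nat ->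
  Ydag l n x0 x1 x2 =
  gradq (dV0 (n + 1) x0 x1 x2 l) (dV1 (n + 1) x0 x1 x2 l) (dV2 (n + 1) x0 x1 x2 l).
Proof.
  intros Hr Hl; unfold Ydag.
  destruct l as [|k]; [unfold qzero, gradq, dV0, dV1, dV2, zim; simpl; f_equal; field; exact Hr|].
  cbn [Nat.eqb]; destruct (Nat.leb (n + 2) (S k)) eqn:E.
  - apply Nat.leb_le in E; replace (S k) with (S (n + 1)) by lia.
    unfold gradq, dV0, dV1, dV2, alpha, beta, legc; rewrite !dLegendre_vanish by lia.
    unfold qzero; f_equal; field; exact Hr.
  - change (halfDbar (harmV (S k) n) x0 x1 x2 = gradq (dV0 (n + 1) x0 x1 x2 (S k))
      (dV1 (n + 1) x0 x1 x2 (S k)) (dV2 (n + 1) x0 x1 x2 (S k))).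
    destruct (partials_harmV k n x0 x1 x2 Hr) as [<- [<- <-]]; reflexivity.
Qed.

(** * The recurrences off the origin *)

(** [uL0 .. vU2] are the partial derivatives of [u + i v] at the levels [m - 1], [m], [m + 1]
    (suffixes [L], [M], [U]) and [W] is the weight at level [m].  Componentwise, the recurrences
    only involve [d0], [d1 + i d2] and [d1 - i d2] applied to [u + i v], which is why each level
    enters through these combinations. *)
Section ThreeTermRecurrence.

Variables (n m r W : R) (aL bL aM bM aU bU : R)
  (alphaL betaL alphaM betaM gammaM alphaU gammaU : R)
  (uL0 uL1 uL2 vL0 vL1 vL2 uM0 uM1 uM2 vM0 vM1 vM2 uU0 uU1 uU2 vU0 vU1 vU2 : R).

Hypotheses (Hr : r <> 0) (Hnm : n + m + 2 <> 0)
  (HuL0 : uL0 = W * alphaL * aL) (HvL0 : vL0 = W * alphaL * bL)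
  (HL1 : uL1 - vL2 = W / r * betaL * aM) (HL2 : uL2 + vL1 = W / r * betaL * bM)
  (HuM0 : uM0 = W / r * alphaM * aM) (HvM0 : vM0 = W / r * alphaM * bM)
  (HMp1 : uM1 - vM2 = W / r ^ 2 * betaM * aU) (HMp2 : uM2 + vM1 = W / r ^ 2 * betaM * bU)
  (HMm1 : uM1 + vM2 = W * gammaM * aL) (HMm2 : vM1 - uM2 = W * gammaM * bL)
  (HuU0 : uU0 = W / r ^ 2 * alphaU * aU) (HvU0 : vU0 = W / r ^ 2 * alphaU * bU)
  (HU1 : uU1 + vU2 = W / r * gammaU * aM) (HU2 : vU1 - uU2 = W / r * gammaU * bM)
  (HalphaM : alphaM = - (n + m + 1) * betaL) (HalphaU : alphaU = - (n + m + 2) * betaM)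
  (HgammaM : gammaM = (n + m + 1) * alphaL) (HgammaU : gammaU = (n + m + 2) * alphaM).

Lemma gradq_three_term :
  gradq uM0 uM1 uM2 =
    qadd (qscal (- (n + m + 1) / 2) (qsub (qmul (gradq uL0 uL1 uL2) qe1) (qmul (gradq vL0 vL1 vL2) qe2)))
         (qscal (/ (2 * (n + m + 2))) (qadd (qmul (gradq uU0 uU1 uU2) qe1) (qmul (gradq vU0 vU1 vU2) qe2)))
  /\
  gradq vM0 vM1 vM2 =
    qadd (qscal (- (n + m + 1) / 2) (qadd (qmul (gradq vL0 vL1 vL2) qe1) (qmul (gradq uL0 uL1 uL2) qe2)))
         (qscal (/ (2 * (n + m + 2))) (qsub (qmul (gradq vU0 vU1 vU2) qe1) (qmul (gradq uU0 uU1 uU2) qe2))).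
Proof.
  assert (EuL1 : uL1 = vL2 + W / r * betaL * aM) by lra.
  assert (EuL2 : uL2 = - vL1 + W / r * betaL * bM) by lra.
  assert (EuM1 : uM1 = (W / r ^ 2 * betaM * aU + W * gammaM * aL) / 2) by lra.
  assert (EvM2 : vM2 = (W * gammaM * aL - W / r ^ 2 * betaM * aU) / 2) by lra.
  assert (EuM2 : uM2 = (W / r ^ 2 * betaM * bU - W * gammaM * bL) / 2) by lra.
  assert (EvM1 : vM1 = (W / r ^ 2 * betaM * bU + W * gammaM * bL) / 2) by lra.
  assert (EuU1 : uU1 = - vU2 + W / r * gammaU * aM) by lra.
  assert (EvU1 : vU1 = uU2 + W / r * gammaU * bM) by lra.
  rewrite EuL1, EuL2, EuM1, EvM2, EuM2, EvM1, EuU1, EvU1, HuL0, HvL0, HuM0, HvM0, HuU0, HvU0,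
    HalphaU, HgammaU, HalphaM, HgammaM.
  unfold gradq, qadd, qsub, qscal, qmul, qopp, qe1, qe2; simpl.
  split; f_equal; field; auto.
Qed.

End ThreeTermRecurrence.

Lemma gradq_two_term n r W alpha0 beta0 alpha1 gamma1 x1 x2 u0 u1 u2 U0 U1 U2 V0 V1 V2 :
  r <> 0 -> n + 2 <> 0 ->
  u0 = W * alpha0 -> u1 = W / r * beta0 * x1 -> u2 = W / r * beta0 * x2 ->
  U0 = W / r * alpha1 * x1 -> V0 = W / r * alpha1 * x2 -> U1 + V2 = W * gamma1 -> V1 - U2 = 0 ->
  alpha1 = - (n + 2) * beta0 -> gamma1 = (n + 2) * alpha0 ->
  gradq u0 u1 u2 = qscal (/ (n + 2)) (qadd (qmul (gradq U0 U1 U2) qe1) (qmul (gradq V0 V1 V2) qe2)).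
Proof.
  intros Hr Hn Hu0 Hu1 Hu2 HU0 HV0 Hp Hm Halpha Hgamma.
  assert (EU1 : U1 = W * gamma1 - V2) by lra.
  assert (EV1 : V1 = U2) by lra.
  rewrite Hu0, Hu1, Hu2, HU0, HV0, EU1, EV1, Halpha, Hgamma.
  unfold gradq, qadd, qscal, qmul, qe1, qe2; simpl.
  f_equal; field; auto.
Qed.

Ltac solve_level_data Hr :=
  first [ rewrite dU1_sub_dV2 | rewrite dU2_add_dV1 | rewrite dU1_add_dV2 by exact Hr
        | rewrite dV1_sub_dU2 by exact Hr | idtac ];
  unfold dU0, dV0, dU1, dU2; repeat rewrite (weight_S _ _ _ _ Hr);
  rewrite ?zre_S, ?zim_S; unfold zre, zim; simpl; field; exact Hr.

Definition basis_recurrences (n : nat) (x0 x1 x2 : R) : Prop :=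
  Xdag 0 n x0 x1 x2 =
    qscal (/ (INR n + 2)) (qadd (qmul (Xdag 1 n x0 x1 x2) qe1) (qmul (Ydag 1 n x0 x1 x2) qe2))
  /\ (forall m : nat, (1 <= m <= n + 1)%nat ->
    Xdag m n x0 x1 x2 =
      qadd (qscal (- (INR n + INR m + 1) / 2)
              (qsub (qmul (Xdag (m - 1) n x0 x1 x2) qe1) (qmul (Ydag (m - 1) n x0 x1 x2) qe2)))
           (qscal (/ (2 * (INR n + INR m + 2)))
              (qadd (qmul (Xdag (m + 1) n x0 x1 x2) qe1) (qmul (Ydag (m + 1) n x0 x1 x2) qe2)))
    /\
    Ydag m n x0 x1 x2 =
      qadd (qscal (- (INR n + INR m + 1) / 2)
              (qadd (qmul (Ydag (m - 1) n x0 x1 x2) qe1) (qmul (Xdag (m - 1) n x0 x1 x2) qe2)))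
           (qscal (/ (2 * (INR n + INR m + 2)))
              (qsub (qmul (Ydag (m + 1) n x0 x1 x2) qe1) (qmul (Xdag (m + 1) n x0 x1 x2) qe2)))).

Lemma basis_recurrences_off_origin n x0 x1 x2 : radius x0 x1 x2 <> 0 -> basis_recurrences n x0 x1 x2.
Proof.
  intros Hr; pose proof (pos_INR n); split.
  - rewrite (Xdag_off_origin 0), (Xdag_off_origin 1), (Ydag_off_origin 1) by (auto; lia).
    apply (gradq_two_term (INR n) (radius x0 x1 x2) (weight (n + 1) x0 x1 x2 1) (alpha (n + 1) x0 x1 x2 0)
             (beta (n + 1) x0 x1 x2 0) (alpha (n + 1) x0 x1 x2 1) (gamma (n + 1) x0 x1 x2 1) x1 x2);
      [exact Hr | lra | ..].
    all: try solve_level_data Hr.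
    all: (rewrite gamma_S || rewrite alpha_S); rewrite plus_INR; simpl INR; ring.
  - intros m Hm; pose proof (pos_INR m); destruct m as [|k]; [lia|].
    replace (S k - 1)%nat with k by lia; replace (S k + 1)%nat with (S (S k)) by lia.
    rewrite (Xdag_off_origin k), (Xdag_off_origin (S k)), (Xdag_off_origin (S (S k))),
      (Ydag_off_origin k), (Ydag_off_origin (S k)), (Ydag_off_origin (S (S k))) by (auto; lia).
    apply (gradq_three_term (INR n) (INR (S k)) (radius x0 x1 x2) (weight (n + 1) x0 x1 x2 (S k))
      (zre k x1 x2) (zim k x1 x2) (zre (S k) x1 x2) (zim (S k) x1 x2)
      (zre (S (S k)) x1 x2) (zim (S (S k)) x1 x2)
      (alpha (n + 1) x0 x1 x2 k) (beta (n + 1) x0 x1 x2 k) (alpha (n + 1) x0 x1 x2 (S k))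
      (beta (n + 1) x0 x1 x2 (S k)) (gamma (n + 1) x0 x1 x2 (S k))
      (alpha (n + 1) x0 x1 x2 (S (S k))) (gamma (n + 1) x0 x1 x2 (S (S k)))); [exact Hr | lra | ..].
    all: try solve_level_data Hr.
    all: (rewrite gamma_S || rewrite alpha_S); rewrite plus_INR, ?S_INR; simpl INR; ring.
Qed.

(** * At the origin *)

Lemma pow_le_1 x l : 0 <= x <= 1 -> 0 <= x ^ l <= 1.
Proof.
  intros H; induction l as [|l IH]; simpl; [lra|].
  split; [apply Rmult_le_pos; lra | rewrite <- (Rmult_1_l 1); apply Rmult_le_compat; lra].
Qed.

Lemma Rabs_le_sqrt a b : 0 <= b -> Rabs a <= sqrt (a ^ 2 + b).
Proof.
  intros Hb; rewrite <- (sqrt_pow2 (Rabs a)) by apply Rabs_pos.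
  apply sqrt_le_1_alt; rewrite pow2_abs; lra.
Qed.

Lemma Rabs_div_le_1 a r : Rabs a <= r -> r <> 0 -> Rabs (a / r) <= 1.
Proof.
  intros H Hr; assert (0 < r) by (pose proof (Rabs_pos a); lra).
  unfold Rdiv; rewrite Rabs_mult, Rabs_inv, (Rabs_pos_eq r) by lra.
  apply (Rmult_le_reg_r r); [lra|]; field_simplify; lra.
Qed.

Lemma Rabs_cos_th1_le_1 x0 x1 x2 : Rabs (cos_th1 x0 x1 x2) <= 1.
Proof.
  unfold cos_th1; destruct (Req_dec_T (radius x0 x1 x2) 0) as [_|H]; [rewrite Rabs_R1; lra|].
  apply Rabs_div_le_1; [|exact H]. unfold radius; rewrite Rplus_assoc; apply Rabs_le_sqrt; nra.
Qed.

Lemma Rabs_cos_th2_le_1 x1 x2 : Rabs (cos_th2 x1 x2) <= 1.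
Proof.
  unfold cos_th2; destruct (Req_dec_T (rho x1 x2) 0) as [_|H]; [rewrite Rabs_R1; lra|].
  apply Rabs_div_le_1; [|exact H]. apply Rabs_le_sqrt; nra.
Qed.

Lemma Rabs_sin_th2_le_1 x1 x2 : Rabs (sin_th2 x1 x2) <= 1.
Proof.
  unfold sin_th2; destruct (Req_dec_T (rho x1 x2) 0) as [_|H]; [rewrite Rabs_R0; lra|].
  apply Rabs_div_le_1; [|exact H]. unfold rho; rewrite Rplus_comm; apply Rabs_le_sqrt; nra.
Qed.

Lemma Rabs_mult_le a b A B : Rabs a <= A -> Rabs b <= B -> Rabs (a * b) <= A * B.
Proof.
  intros Ha Hb; rewrite Rabs_mult.
  apply Rmult_le_compat; [apply Rabs_pos | apply Rabs_pos | exact Ha | exact Hb].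
Qed.

Lemma assocLegendre_bounded l N :
  exists C, 0 <= C /\ forall t, Rabs t <= 1 -> Rabs (assocLegendre l N t) <= C.
Proof.
  destruct (dLegendre_bounded l N) as [C [HC Hb]]; exists C; split; [exact HC|].
  intros t Ht; rewrite <- (Rmult_1_l C); apply Rabs_mult_le; [|apply Hb, Ht].
  rewrite Rabs_pos_eq by (apply pow_le, sqrt_pos).
  apply pow_le_1; split; [apply sqrt_pos|].
  rewrite <- sqrt_1 at 2; apply sqrt_le_1_alt; pose proof (pow2_ge_0 t); lra.
Qed.

Lemma sphU_bounded l N : exists C, 0 <= C /\ forall a b c, Rabs (sphU l N a b c) <= C.
Proof.
  destruct (assocLegendre_bounded l N) as [C1 [H1 Hb1]].
  destruct (poly_fun_bounded _ _ (ChebT_poly_fun l)) as [C2 [H2 Hb2]].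
  exists (C1 * C2); split; [apply Rmult_le_pos; assumption|].
  intros a b c; apply Rabs_mult_le; [apply Hb1, Rabs_cos_th1_le_1 | apply Hb2, Rabs_cos_th2_le_1].
Qed.

Lemma sphV_bounded l N : exists C, 0 <= C /\ forall a b c, Rabs (sphV l N a b c) <= C.
Proof.
  destruct (assocLegendre_bounded l N) as [C1 [H1 Hb1]].
  destruct (poly_fun_bounded _ _ (ChebU_poly_fun (l - 1))) as [C2 [H2 Hb2]].
  exists (C1 * 1 * C2); split; [apply Rmult_le_pos; lra|].
  intros a b c; apply Rabs_mult_le; [apply Rabs_mult_le|].
  - apply Hb1, Rabs_cos_th1_le_1.
  - apply Rabs_sin_th2_le_1.
  - apply Hb2, Rabs_cos_th2_le_1.
Qed.

Lemma Deriv_zero_of_bound (g : R -> R) C k : 0 <= C -> (2 <= k)%nat ->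
  (forall t, Rabs (g t) <= C * Rabs t ^ k) -> Deriv g 0 = 0.
Proof.
  intros HC Hk Hb; apply Deriv_of_dlim; intros eps Heps.
  assert (Hg0 : g 0 = 0).
  { specialize (Hb 0); rewrite Rabs_R0, pow_i in Hb by lia.
    destruct (Req_dec (g 0) 0) as [E|E]; [exact E|].
    pose proof (Rabs_pos_lt _ E); lra. }
  assert (Hd : 0 < Rmin 1 (eps / (C + 1))) by (apply Rmin_pos; [lra | apply Rdiv_lt_0_compat; lra]).
  exists (mkposreal _ Hd); intros h Hh0 Hh; simpl in Hh.
  assert (H1 : Rabs h <= 1) by (pose proof (Rmin_l 1 (eps / (C + 1))); lra).
  assert (H2 : Rabs h * (C + 1) < eps).
  { pose proof (Rmin_r 1 (eps / (C + 1))).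
    apply (Rmult_lt_reg_r (/ (C + 1))); [apply Rinv_0_lt_compat; lra|].
    replace (Rabs h * (C + 1) * / (C + 1)) with (Rabs h) by (field; lra); lra. }
  assert (Ha : 0 < Rabs h) by (apply Rabs_pos_lt, Hh0).
  assert (Hpow : Rabs h ^ k <= Rabs h ^ 2).
  { replace k with (2 + (k - 2))%nat by lia; rewrite pow_add.
    pose proof (pow_le_1 (Rabs h) (k - 2) (conj (Rabs_pos h) H1)).
    pose proof (pow_le (Rabs h) 2 (Rabs_pos h)); nra. }
  rewrite Rplus_0_l, Hg0, !Rminus_0_r; unfold Rdiv; rewrite Rabs_mult, Rabs_inv.
  apply (Rmult_lt_reg_r (Rabs h)); [exact Ha|].
  rewrite Rmult_assoc, Rinv_l, Rmult_1_r by lra.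
  specialize (Hb h); simpl in Hpow |- *; nra.
Qed.

Lemma radius_on_axes t : radius t 0 0 = Rabs t /\ radius 0 t 0 = Rabs t /\ radius 0 0 t = Rabs t.
Proof.
  unfold radius; rewrite <- (sqrt_pow2 (Rabs t)), pow2_abs by apply Rabs_pos.
  repeat split; f_equal; ring.
Qed.

Lemma partials_vanish_at_origin (F : R -> R -> R -> R) n C : (1 <= n)%nat -> 0 <= C ->
  (forall a b c, Rabs (F a b c) <= C) ->
  let f := fun a b c => radius a b c ^ (n + 1) * F a b c in
  pd0 f 0 0 0 = 0 /\ pd1 f 0 0 0 = 0 /\ pd2 f 0 0 0 = 0.
Proof.
  intros Hn HC Hb f.
  assert (Hf : forall a b c, Rabs (f a b c) <= C * radius a b c ^ (n + 1)).
  { intros a b c; unfold f; rewrite Rabs_mult, Rabs_pos_eq, Rmult_comm by (apply pow_le, sqrt_pos).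
    apply Rmult_le_compat_r; [apply pow_le, sqrt_pos | apply Hb]. }
  repeat split; apply (Deriv_zero_of_bound _ C (n + 1)); auto; try lia; intros t;
    destruct (radius_on_axes t) as [E0 [E1 E2]];
    [rewrite <- E0 | rewrite <- E1 | rewrite <- E2]; apply Hf.
Qed.

Lemma Xdag_origin l n : (1 <= n)%nat -> Xdag l n 0 0 0 = qzero.
Proof.
  intros Hn; unfold Xdag; destruct (Nat.leb (n + 2) l); [reflexivity|].
  destruct (sphU_bounded l (n + 1)) as [C [HC Hb]].
  destruct (partials_vanish_at_origin _ n C Hn HC Hb) as [E0 [E1 E2]].
  unfold halfDbar; rewrite E0, E1, E2; unfold qzero; f_equal; field.
Qed.

Lemma Ydag_origin l n : (1 <= n)%nat -> Ydag l n 0 0 0 = qzero.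
Proof.
  intros Hn; unfold Ydag; destruct (Nat.eqb l 0), (Nat.leb (n + 2) l); try reflexivity.
  destruct (sphV_bounded l (n + 1)) as [C [HC Hb]].
  destruct (partials_vanish_at_origin _ n C Hn HC Hb) as [E0 [E1 E2]].
  unfold halfDbar; rewrite E0, E1, E2; unfold qzero; f_equal; field.
Qed.

(** * Degree zero *)

Lemma degree0_potentials :
  harmU 0 0 = (fun a _ _ => a) /\ harmU 1 0 = (fun _ b _ => b) /\ harmV 1 0 = (fun _ _ c => c).
Proof.
  repeat split; apply functional_extensionality; intros a; apply functional_extensionality; intros b;
    apply functional_extensionality; intros c; unfold harmU, harmV; destruct (Req_dec (radius a b c) 0) as [H|H].
  all: try (destruct (radius_eq0 _ _ _ H) as [-> [-> ->]]; rewrite H, pow_i by lia; ring).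
  - rewrite sphU_solid by exact H; unfold solidU, radial, dLegendre, zre, Legendre; simpl; field; exact H.
  - rewrite sphU_solid by exact H; unfold solidU, radial; rewrite dLegendre_1_1, zre_S;
      unfold zre, zim; simpl; field; exact H.
  - rewrite sphV_solid by exact H; unfold solidV, radial; rewrite dLegendre_1_1, zim_S;
      unfold zre, zim; simpl; field; exact H.
Qed.

Lemma degree0_basis x0 x1 x2 :
  Xdag 0 0 x0 x1 x2 = gradq 1 0 0 /\ Xdag 1 0 x0 x1 x2 = gradq 0 1 0 /\
  Ydag 1 0 x0 x1 x2 = gradq 0 0 1.
Proof.
  destruct degree0_potentials as [HU0 [HU1 HV1]].
  pose proof (fun x => Deriv_of_dlim _ x _ (dlim_id x)) as Did.
  pose proof (fun c x => Deriv_of_dlim _ x _ (dlim_const c x)) as Dconst.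
  repeat split; [change (halfDbar (harmU 0 0) x0 x1 x2 = gradq 1 0 0); rewrite HU0
                |change (halfDbar (harmU 1 0) x0 x1 x2 = gradq 0 1 0); rewrite HU1
                |change (halfDbar (harmV 1 0) x0 x1 x2 = gradq 0 0 1); rewrite HV1];
    unfold halfDbar, pd0, pd1, pd2; rewrite ?Did, ?Dconst; reflexivity.
Qed.

Lemma basis_recurrences_at_origin n : (1 <= n)%nat -> basis_recurrences n 0 0 0.
Proof.
  intros Hn; pose proof (pos_INR n).
  split; [|intros m Hm; pose proof (pos_INR m); split]; rewrite !Xdag_origin, !Ydag_origin by exact Hn;
    unfold qzero, qsub, qscal, qadd, qopp, qmul; cbn [q0 q1 q2 q3]; f_equal; field; lra.
Qed.

Lemma basis_recurrences_degree0 x0 x1 x2 : basis_recurrences 0 x0 x1 x2.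
Proof.
  destruct (degree0_basis x0 x1 x2) as [HX0 [HX1 HY1]].
  split; [|intros m Hm; replace m with 1%nat by lia; cbn [Nat.sub Nat.add]; split];
    rewrite ?HX0, ?HX1, ?HY1;
    change (Ydag 0 0 x0 x1 x2) with qzero; change (Xdag 2 0 x0 x1 x2) with qzero;
    change (Ydag 2 0 x0 x1 x2) with qzero;
    unfold gradq, qzero, qsub, qscal, qadd, qopp, qmul, qe1, qe2; simpl; f_equal; field.
Qed.

Theorem proposition2 :
  (forall (n : nat) (x0 x1 x2 : R),
      Xdag 0 n x0 x1 x2 =
        qscal (/ (INR n + 2))
          (qadd (qmul (Xdag 1 n x0 x1 x2) qe1) (qmul (Ydag 1 n x0 x1 x2) qe2))
   /\ (forall m : nat, (1 <= m <= n + 1)%nat ->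
        Xdag m n x0 x1 x2 =
          qadd
            (qscal (- (INR n + INR m + 1) / 2)
               (qsub (qmul (Xdag (m - 1) n x0 x1 x2) qe1)
                     (qmul (Ydag (m - 1) n x0 x1 x2) qe2)))
            (qscal (/ (2 * (INR n + INR m + 2)))
               (qadd (qmul (Xdag (m + 1) n x0 x1 x2) qe1)
                     (qmul (Ydag (m + 1) n x0 x1 x2) qe2)))
        /\
        Ydag m n x0 x1 x2 =
          qadd
            (qscal (- (INR n + INR m + 1) / 2)
               (qadd (qmul (Ydag (m - 1) n x0 x1 x2) qe1)
                     (qmul (Xdag (m - 1) n x0 x1 x2) qe2)))
            (qscal (/ (2 * (INR n + INR m + 2)))
               (qsub (qmul (Ydag (m + 1) n x0 x1 x2) qe1)
                     (qmul (Xdag (m + 1) n x0 x1 x2) qe2)))))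
  /\
  (forall x0 x1 x2 : R,
      Xdag 0 0 x0 x1 x2 = qreal (1 / 2)
   /\ qmul (Xdag 1 0 x0 x1 x2) qe1 = qreal (1 / 2)
   /\ qmul (Ydag 1 0 x0 x1 x2) qe2 = qreal (1 / 2)).
Proof.
  split.
  - intros n x0 x1 x2; change (basis_recurrences n x0 x1 x2).
    destruct n as [|n]; [apply basis_recurrences_degree0|].
    destruct (Req_dec (radius x0 x1 x2) 0) as [H|H].
    + destruct (radius_eq0 _ _ _ H) as [-> [-> ->]]; apply basis_recurrences_at_origin; lia.
    + apply basis_recurrences_off_origin, H.
  - intros x0 x1 x2; destruct (degree0_basis x0 x1 x2) as [-> [-> ->]].
    unfold gradq, qreal, qmul, qe1, qe2; simpl; repeat split; f_equal; field.
Qed.
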